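(* Let $\mathcal P$ be a family of filters over some set $I$. A product $\prod_{j\in J} X_j$ of (nonempty) topological spaces is sequencewise $\mathcal P$-compact if and only if, for every $K\subseteq J$ with $|K|\leq|\mathcal P|$, the subproduct $\prod_{j\in K} X_j$ is sequencewise $\mathcal P$-compact.
   Context: No separation axioms are assumed; all topological spaces are nonempty. If $X$ is a topological space, $(x_i)_{i\in I}$ is an $I$-indexed sequence of elements of $X$ and $F$ is a filter over $I$, a point $x\in X$ is an $F$-limit point of $(x_i)_{i\in I}$ (equivalently, the sequence $F$-converges to $x$) if $\{i\in I\mid x_i\in U\}\in F$ for every open neighborhood $U$ of $x$. If $\mathcal P$ is a family of filters over $I$, a space $X$ is sequencewise $\mathcal P$-compact if for every $I$-indexed sequence of elements of $X$ there is $F\in\mathcal P$ such that the sequence has an $F$-limit point in $X$. *)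

From HB Require Import structures.
From mathcomp Require Import all_boot all_order.
From mathcomp Require Import all_classical all_reals all_analysis.
Set Implicit Arguments. Unset Strict Implicit. Unset Printing Implicit Defensive.
Local Open Scope classical_set_scope.

Definition F_limit_point {I : Type} {X : topologicalType}
  (F : set_system I) (s : I -> X) (x : X) : Prop :=
  forall U : set X, open U -> U x -> F [set i | U (s i)].

Definition seqwise_compact {I : Type} (P : set (set_system I))
  (X : topologicalType) : Prop :=
  forall s : I -> X, exists F, P F /\ exists x : X, F_limit_point F s x.

Definition subproduct {J : Type} (X : J -> topologicalType) (K : set J)
  : topologicalType := prod_topology (fun k : {j : J | K j} => X (proj1_sig k)).

From HB Require Import structures.
From mathcomp Require Import all_boot all_order.
From mathcomp Require Import all_classical all_reals all_analysis.
Local Open Scope classical_set_scope.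
Local Open Scope card_scope.
Set Implicit Arguments.

(* A sequence in a product has an F-limit point iff every coordinate
   sequence has one.  Hence a subproduct, being a continuous image of the
   product (the factors are nonempty), inherits sequencewise P-compactness.
   Conversely, if some sequence s in the product has no suitable F, choose
   for each F in P a coordinate j_F along which s has no F-limit point; the
   set K of these j_F has size at most |P|, and compactness of the
   subproduct over K yields an F in P for which the coordinate j_F does
   converge, a contradiction. *)

Lemma F_limit_pointE (I : Type) (X : topologicalType) (F : set_system I)
    (s : I -> X) (x : X) :
  Filter F -> F_limit_point F s x <-> s @ F --> x.
Proof.
move=> FF; split=> [sx A|sx U oU Ux].
  by rewrite nbhsE => -[B [oB Bx] BA]; apply: filterS BA (sx B oB Bx).
by apply: sx; apply: open_nbhs_nbhs.
Qed.

Lemma F_limit_point_comp (I : Type) (Y Z : topologicalType) (F : set_system I)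
    (g : Y -> Z) (s : I -> Y) (y : Y) :
  continuous g -> F_limit_point F s y -> F_limit_point F (g \o s) (g y).
Proof. by move=> /continuousP cg sy U oU Uy; apply: sy (cg U oU) Uy. Qed.

Section product.
Context {J : Type} {X : J -> topologicalType}.

Lemma cvg_prodP (G : set_system (prod_topology X)) (x : prod_topology X) :
  Filter G -> G --> x <-> forall j, (fun f => f j) @ G --> x j.
Proof.
move=> FG; split=> [Gx j A|Gx].
  rewrite nbhsE => -[C [oC Cx] CA].
  have Gxj := (cvg_sup _ x FG).1 Gx.
  have : nbhs (x : initial_topology (fun f : (forall j, X j) => f j))
              ((fun f => f j) @^-1` C).
    by apply: open_nbhs_nbhs; split=> //; exists C.
  by move=> /(Gxj j); apply: filterS => f /CA.
apply/(cvg_sup _ x FG) => j A.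
rewrite (@nbhsE (initial_topology _)) => -[_ [[C oC <-] Cx] CA].
by apply: filterS CA _; apply: (Gx j); apply: open_nbhs_nbhs.
Qed.

Lemma prod_proj_continuous j : continuous (fun f : prod_topology X => f j).
Proof. by move=> x; apply: (cvg_prodP x _).1 (@cvg_id _ (nbhs x)) j. Qed.

Lemma F_limit_point_prodP (I : Type) (F : set_system I)
    (s : I -> prod_topology X) (x : prod_topology X) :
  Filter F ->
  F_limit_point F s x <-> forall j, F_limit_point F (fun i => s i j) (x j).
Proof.
move=> FF; rewrite F_limit_pointE cvg_prodP.
by split=> sx j; apply/F_limit_pointE; apply: sx.
Qed.

Lemma seqwise_compact_prodP (I : Type) (P : set (set_system I)) :
  (forall F, P F -> Filter F) ->
  seqwise_compact P (prod_topology X) <->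
  forall s : I -> prod_topology X,
    exists F, P F /\ forall j, exists y, F_limit_point F (fun i => s i j) y.
Proof.
move=> PFilter; split=> [Pc s|Pc s].
  have [F [PF [x sx]]] := Pc s; exists F; split=> // j.
  by exists (x j); apply: (F_limit_point_prodP _ _ (PFilter F PF)).1 sx j.
have [F [PF Fj]] := Pc s; exists F; split=> //.
exists (fun j => projT1 (cid (Fj j))).
apply/(F_limit_point_prodP _ _ (PFilter F PF)) => j.
exact: projT2 (cid (Fj j)).
Qed.

End product.

Lemma seqwise_compact_surj_image (I : Type) (P : set (set_system I))
    (Y Z : topologicalType) (g : Y -> Z) :
  continuous g -> set_surj [set: Y] [set: Z] g ->
  seqwise_compact P Y -> seqwise_compact P Z.
Proof.
move=> cg gsurj Yc s.
have /choice[t gt] : forall i, exists y, g y = s i.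
  by move=> i; have [y _] := gsurj (s i) Logic.I; exists y.
have [F [PF [y ty]]] := Yc t; exists F; split=> //; exists (g y).
have -> : s = g \o t by apply: funext => i; rewrite /= gt.
exact: F_limit_point_comp.
Qed.

Lemma choice_card_le {A B : Type} {P : set A} {Q : A -> B -> Prop} :
  (forall a, P a -> exists b, Q a b) ->
  exists K : set B, K #<= P /\ forall a, P a -> exists2 b, K b & Q a b.
Proof.
move=> PQ; have [[a0 Pa0]|noP] := pselect (exists a, P a); last first.
  by exists set0; split=> [|a Pa]; [exact: card_ge0|case: noP; exists a].
have [b0 _] := PQ a0 Pa0.
have /choice[g gQ] : forall a, exists b, P a -> Q a b.
  move=> a; have [/PQ[b Qab]|nPa] := pselect (P a); first by exists b.
  by exists b0.
exists (g @` P); split=> [|a Pa]; first exact: card_image_le.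
by exists (g a); [exists a|apply: gQ].
Qed.

Section subproduct.
Context {J : Type} {X : J -> topologicalType}.

Definition restrict (K : set J) (f : prod_topology X) :
    prod_topology (fun k : {j | K j} => X (proj1_sig k)) :=
  fun k => f (proj1_sig k).

Lemma restrict_continuous K : continuous (restrict K).
Proof.
move=> f; have Ff : Filter (restrict K @ f).
  by apply: fmap_filter; exact: (@nbhs_filter (prod_topology X)).
by apply/(cvg_prodP _ Ff) => k; apply: (prod_proj_continuous (proj1_sig k) f).
Qed.

Lemma restrict_surj (d : prod_topology X) K :
  set_surj [set: _] [set: _] (restrict K).
Proof.
move=> y _.
pose f j := if pselect (K j) is left Kj then y (exist _ j Kj) else d j.
exists f => //.
apply: functional_extensionality_dep => -[j Kj]; rewrite /restrict /f /=.
by case: pselect => [Kj'|//]; rewrite (Prop_irrelevance Kj' Kj).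
Qed.

Lemma seqwise_compact_subproduct (I : Type) (P : set (set_system I)) K :
  (forall j, inhabited (X j)) ->
  seqwise_compact P (prod_topology X) -> seqwise_compact P (subproduct X K).
Proof.
move=> hX; pose d j := inhabited_witness (hX j).
exact: (seqwise_compact_surj_image (restrict_continuous (K:=K))
                                   (restrict_surj d K)).
Qed.

Lemma seqwise_compact_prod_of_subproducts (I : Type) (P : set (set_system I)) :
  (forall F, P F -> Filter F) ->
  (forall K : set J, K #<= P -> seqwise_compact P (subproduct X K)) ->
  seqwise_compact P (prod_topology X).
Proof.
move=> PFilter Pc; apply/(@seqwise_compact_prodP _ X _ _ PFilter) => s.
apply: contrapT => noF.
have bad F : P F -> exists j, ~ exists y, F_limit_point F (fun i => s i j) y.
  move=> PF; apply: contrapT => /forallNP Fj.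
  by apply: noF; exists F; split=> // j; apply: contrapT (Fj j).
have [K [KP Kbad]] := choice_card_le bad.
have [F [PF [y sy]]] := Pc K KP (fun i => restrict K (s i)).
have [j Kj nolim] := Kbad F PF; apply: nolim; exists (y (exist _ j Kj)).
exact: (F_limit_point_prodP _ _ (PFilter F PF)).1 sy (exist _ j Kj).
Qed.

End subproduct.

Theorem theorem2p1 (I J : Type) (P : set (set_system I))
  (hP : forall F, P F -> ProperFilter F)
  (X : J -> topologicalType) (hX : forall j, inhabited (X j)) :
  seqwise_compact P (prod_topology X) <->
  (forall K : set J, K #<= P -> seqwise_compact P (subproduct X K)).
Proof.
split=> [Pc K _|]; first exact: seqwise_compact_subproduct.
by apply: seqwise_compact_prod_of_subproducts => F PF; exact: hP.
Qed.
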